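(* Let $S$ be a rectangular domain and $\bar\eta$ a flow field on $\mathbb{E}(\bar S)$. Let $E_{\mathrm{low}}$ be the set of edges $\langle y,y'\rangle$ with $y\in S$, $y'\in\partial\bar S$ and $x(y')=x(y)-1$, and let $E_{\mathrm{up}}$ be the set of such edges with $x(y')=x(y)+1$. Then $$\sum_{e\in E_{\mathrm{low}}}\eta(e)=\sum_{e\in E_{\mathrm{up}}}\eta(e)=\sum_{\ell\in C(S)}w_\eta(\ell).$$
   Context: Lattice and edges. $\tilde{\mathbb{Z}}^2=\{(t,x)\in\mathbb{Z}^2:t+x\text{ even}\}$; edges join points at distance $\sqrt2$; for a point $y=(t,x)$ write $x(y)=x$. Also: - $e^\nearrow_y=\langle(t,x),(t+1,x+1)\rangle$, - $e^\searrow_y=\langle(t,x),(t+1,x-1)\rangle$, - $e^\swarrow_y=\langle(t-1,x-1),(t,x)\rangle$, - $e^\nwarrow_y=\langle(t-1,x+1),(t,x)\rangle$. Domains. A rectangular domain is a nonempty set $S=\{(t,x)\in\tilde{\mathbb{Z}}^2: a\le t+x\le b,\ c\le t-x\le d\}$ with even integers $a\le b$, $c\le d$. $\bar S$ is $S$ together with all points joined by an edge to a point of $S$; $\partial\bar S=\bar S\setminus S$; $\mathbb{E}(\bar S)$ is the set of edges with at least one endpoint in $S$. Flow field. A flow field is $\eta(e)\ge0$, $e\in\mathbb{E}(\bar S)$, with $\eta(e^\nwarrow_y)+\eta(e^\nearrow_y)=\eta(e^\swarrow_y)+\eta(e^\searrow_y)$ for all $y\in S$; $\xi_y=\eta(e^\nearrow_y)\wedge\eta(e^\searrow_y)$.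 Association. For $y\in S$, lower edge $f_1\in\{e^\swarrow_y,e^\searrow_y\}$ with $p_1\in(0,\eta(f_1)]$, and upper edge $f_2\in\{e^\nwarrow_y,e^\nearrow_y\}$ with $p_2\in(0,\eta(f_2)]$, write $(f_1,p_1)\sim_y(f_2,p_2)$ exactly when: - Case 1: $f_1=e^\swarrow_y$, $f_2=e^\nwarrow_y$, $p_1\le\eta(f_1)\wedge\eta(f_2)$, $p_2=p_1$; - Case 2: $f_1=e^\searrow_y$, $f_2=e^\nwarrow_y$, $p_2>\eta(e^\swarrow_y)$, $p_1=p_2-\eta(e^\swarrow_y)$; - Case 3: $f_1=e^\swarrow_y$, $f_2=e^\nearrow_y$, $p_1>\eta(e^\nwarrow_y)$, $p_2=p_1-\eta(e^\nwarrow_y)$; - Case 4: $f_1=e^\searrow_y$, $f_2=e^\nearrow_y$, $p_i>\eta(f_i)-\xi_y$, $\eta(f_1)-p_1=\eta(f_2)-p_2$. Broken traces. A broken trace is $\ell=(y_0,e_1,y_1,\dots,e_n,y_n)$, $n\ge1$, with $e_i=\langle y_{i-1},y_i\rangle$, $x_i=x_{i-1}+1$, $t_i-t_{i-1}\in\{\pm1\}$. $\ell\subseteq\bar S$ means $y_0,y_n\in\bar S$, $y_1,\dots,y_{n-1}\in S$, all $e_i\in\mathbb{E}(\bar S)$. $C(S)$ is the set of $\ell\subseteq\bar S$ with $y_0,y_n\in\partial\bar S$. Weight. $w_\eta(\ell)$ is the Lebesgue measure of the set of $p_1\in(0,\eta(e_1)]$ admitting $p_i\in(0,\eta(e_i)]$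 with $(e_{i-1},p_{i-1})\sim_{y_{i-1}}(e_i,p_i)$ for $i=2,\dots,n$. *)

From Stdlib Require Import Reals ZArith List ClassicalEpsilon.
Import ListNotations.
Open Scope R_scope.

Definition point : Type := (Z * Z)%type.
Definition tc (y : point) : Z := fst y.
Definition xc (y : point) : Z := snd y.

Definition lattice (y : point) : Prop := Z.Even (tc y + xc y).

Definition adjacent (y z : point) : Prop :=
  Z.abs (tc y - tc z) = 1%Z /\ Z.abs (xc y - xc z) = 1%Z.

(** An (unoriented) edge is encoded canonically by its endpoint with the
    smaller time coordinate, together with a direction:
    (y, true)  = <(t,x),(t+1,x+1)>,  (y, false) = <(t,x),(t+1,x-1)>. *)
Definition edge : Type := (point * bool)%type.
Definition edge_lo (e : edge) : point := fst e.
Definition edge_hi (e : edge) : point :=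
  (tc (fst e) + 1, if snd e then xc (fst e) + 1 else xc (fst e) - 1)%Z.

Definition e_NE (y : point) : edge := (y, true).
Definition e_SE (y : point) : edge := (y, false).
Definition e_SW (y : point) : edge := ((tc y - 1, xc y - 1)%Z, true).
Definition e_NW (y : point) : edge := ((tc y - 1, xc y + 1)%Z, false).

Definition rect (a b c d : Z) (y : point) : Prop :=
  lattice y /\ (a <= tc y + xc y <= b)%Z /\ (c <= tc y - xc y <= d)%Z.

Definition inSbar (S : point -> Prop) (y : point) : Prop :=
  S y \/ exists z, S z /\ adjacent z y.
Definition inBd (S : point -> Prop) (y : point) : Prop := inSbar S y /\ ~ S y.
Definition inE (S : point -> Prop) (e : edge) : Prop := S (edge_lo e) \/ S (edge_hi e).

Definition flow_field (S : point -> Prop) (eta : edge -> R) : Prop :=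
  (forall e, inE S e -> 0 <= eta e) /\
  (forall y, S y -> eta (e_NW y) + eta (e_NE y) = eta (e_SW y) + eta (e_SE y)).

Definition xi (eta : edge -> R) (y : point) : R := Rmin (eta (e_NE y)) (eta (e_SE y)).

Definition assoc (S : point -> Prop) (eta : edge -> R) (y : point)
  (f1 : edge) (p1 : R) (f2 : edge) (p2 : R) : Prop :=
  S y /\ (f1 = e_SW y \/ f1 = e_SE y) /\ (f2 = e_NW y \/ f2 = e_NE y) /\
  0 < p1 <= eta f1 /\ 0 < p2 <= eta f2 /\
  ( (f1 = e_SW y /\ f2 = e_NW y /\ p1 <= Rmin (eta f1) (eta f2) /\ p2 = p1)
 \/ (f1 = e_SE y /\ f2 = e_NW y /\ p2 > eta (e_SW y) /\ p1 = p2 - eta (e_SW y))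
 \/ (f1 = e_SW y /\ f2 = e_NE y /\ p1 > eta (e_NW y) /\ p2 = p1 - eta (e_NW y))
 \/ (f1 = e_SE y /\ f2 = e_NE y /\ p1 > eta f1 - xi eta y /\ p2 > eta f2 - xi eta y /\
     eta f1 - p1 = eta f2 - p2) ).

(** Broken traces, represented by their list of points [y0; ...; yn]. *)
Definition edge_between (y z : point) : edge :=
  if Z.eqb (tc z) (tc y + 1) then e_NE y else e_SE z.

Fixpoint steps (l : list point) : Prop :=
  match l with
  | y :: ((z :: _) as r) =>
      xc z = (xc y + 1)%Z /\ (tc z = (tc y + 1)%Z \/ tc z = (tc y - 1)%Z) /\ steps r
  | _ => True
  end.

Definition is_trace (l : list point) : Prop := (2 <= length l)%nat /\ steps l.

Fixpoint trace_edges (l : list point) : list edge :=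
  match l with
  | y :: ((z :: _) as r) => edge_between y z :: trace_edges r
  | _ => []
  end.

Definition in_C (S : point -> Prop) (l : list point) : Prop :=
  is_trace l /\
  inBd S (hd (0, 0)%Z l) /\ inBd S (last l (0, 0)%Z) /\
  Forall S (removelast (tl l)) /\
  Forall (inE S) (trace_edges l).

(** chain pts e p : pts = [y_i; ...; y_n], e = e_i, p = p_i; there exist
    p_{i+1},...,p_n with the required associations. *)
Fixpoint chain (S : point -> Prop) (eta : edge -> R) (pts : list point)
  (e : edge) (p : R) : Prop :=
  match pts with
  | y :: ((z :: _) as r) =>
      exists p', assoc S eta y e p (edge_between y z) p' /\
                 chain S eta r (edge_between y z) p'
  | _ => True
  end.

Definition wset (S : point -> Prop) (eta : edge -> R) (l : list point) (p : R) : Prop :=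
  match l with
  | y0 :: ((y1 :: _) as r) =>
      0 < p <= eta (edge_between y0 y1) /\ chain S eta r (edge_between y0 y1) p
  | _ => False
  end.

Definition is_cover (A : R -> Prop) (u v : nat -> R) : Prop :=
  (forall n, u n <= v n) /\ (forall p, A p -> exists n, u n < p < v n).

Definition is_lebesgue_measure (A : R -> Prop) (m : R) : Prop :=
  (forall u v s, is_cover A u v -> infinite_sum (fun n => v n - u n) s -> m <= s) /\
  (forall eps, 0 < eps -> exists u v s,
      is_cover A u v /\ infinite_sum (fun n => v n - u n) s /\ s < m + eps).

Definition lebesgue_measure (A : R -> Prop) : R :=
  epsilon (inhabits 0) (is_lebesgue_measure A).

Definition w (S : point -> Prop) (eta : edge -> R) (l : list point) : R :=
  lebesgue_measure (wset S eta l).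

Definition E_low (S : point -> Prop) (e : edge) : Prop :=
  exists y, S y /\
    ((e = e_SW y /\ inBd S (tc y - 1, xc y - 1)%Z) \/
     (e = e_SE y /\ inBd S (tc y + 1, xc y - 1)%Z)).
Definition E_up (S : point -> Prop) (e : edge) : Prop :=
  exists y, S y /\
    ((e = e_NW y /\ inBd S (tc y - 1, xc y + 1)%Z) \/
     (e = e_NE y /\ inBd S (tc y + 1, xc y + 1)%Z)).

Definition sum_list {A : Type} (f : A -> R) (L : list A) : R :=
  fold_right (fun a acc => f a + acc) 0 L.

(* Writing S as the image of
   an integer grid [0, MM] x [0, NN] (north-east steps increase i, north-west
   steps increase j), Llow and Lup are the edges of the steps entering and
   leaving S (characterised for an arbitrary domain by [E_low_entry] and
   [E_up_exit]), and LC lists, for each entering step, all exit paths that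
   continue it (characterised by [in_C_iff] and enumerated by [paths]).

   - Llow and Lup carry the same flow: conservation at every vertex is a
     discrete divergence identity on the grid ([grid_flux_balance]).
   - The traces beginning with an entering edge f weigh eta f in total.  At
     a vertex, the association translates the heights of the incoming lower
     edge to the two upper edges, cutting them at a threshold
     ([assoc_window]).  So the heights followed along a trace form a
     half-open interval, whose Lebesgue measure is its length
     ([chain_window], [interval_measure]), and the intervals of the exit
     paths from a vertex partition the heights of the incoming edge
     ([paths_window_sum]). *)

From Stdlib Require Import Reals ZArith List Lra Lia ClassicalEpsilon.
Import ListNotations.
Open Scope R_scope.

Lemma sum_list_app {A} (f : A -> R) L1 L2 :
  sum_list f (L1 ++ L2) = sum_list f L1 + sum_list f L2.
Proof. induction L1 as [|x L1 IH]; simpl; [lra|]. rewrite IH; lra. Qed.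

Lemma sum_list_map {A B} (f : B -> R) (g : A -> B) L :
  sum_list f (map g L) = sum_list (fun x => f (g x)) L.
Proof. induction L; simpl; congruence. Qed.

Lemma sum_list_ext_in {A} (f g : A -> R) L :
  (forall x, In x L -> f x = g x) -> sum_list f L = sum_list g L.
Proof. induction L; simpl; intros H; auto. rewrite H, IHL; auto. Qed.

Lemma sum_list_nonneg {A} (f : A -> R) L :
  (forall x, In x L -> 0 <= f x) -> 0 <= sum_list f L.
Proof.
  induction L as [|x L IH]; simpl; intros H; [lra|].
  assert (0 <= f x) by auto. assert (0 <= sum_list f L) by auto. lra.
Qed.

Lemma sum_list_plus {A} (f g : A -> R) L :
  sum_list (fun x => f x + g x) L = sum_list f L + sum_list g L.
Proof. induction L; simpl; lra. Qed.

Lemma sum_list_minus {A} (f g : A -> R) L :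
  sum_list (fun x => f x - g x) L = sum_list f L - sum_list g L.
Proof. induction L; simpl; lra. Qed.

Lemma sum_list_zero {A} (L : list A) : sum_list (fun _ => 0) L = 0.
Proof. induction L; simpl; lra. Qed.

Lemma sum_list_exchange {A B} (F : A -> B -> R) L1 L2 :
  sum_list (fun i => sum_list (fun j => F i j) L2) L1 =
  sum_list (fun j => sum_list (fun i => F i j) L1) L2.
Proof.
  induction L1; simpl.
  - rewrite sum_list_zero; auto.
  - rewrite IHL1, <- sum_list_plus; auto.
Qed.

Lemma sum_flat_map {A B} (f : B -> R) (g : A -> list B) L :
  sum_list f (flat_map g L) = sum_list (fun x => sum_list f (g x)) L.
Proof. induction L; simpl; auto. rewrite sum_list_app, IHL; auto. Qed.

Lemma sum_seq (g : nat -> R) N : sum_list g (seq 0 (S N)) = sum_f_R0 g N.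
Proof.
  induction N; [simpl; lra|].
  rewrite seq_S, sum_list_app, IHN. simpl. lra.
Qed.

(** ** The Lebesgue measure of a half-open interval

    We only need it on intervals [(al, be]]: the
    lower bound on the length of a countable open cover comes from the
    Heine–Borel theorem ([compact_P3]) applied to a slightly shorter closed
    interval. *)

Definition len (x y : R) : R := Rmax 0 (y - x).

Lemma finite_cover_length (u v : nat -> R) :
  (forall n, u n <= v n) ->
  forall (L : list nat) a b, a <= b ->
  (forall x, a <= x <= b -> exists k, In k L /\ u k < x < v k) ->
  b - a <= sum_list (fun k => v k - u k) L.
Proof.
  intros Huv L. remember (length L) as n eqn:En.
  assert (Hn : (length L <= n)%nat) by lia. clear En. revert L Hn.
  induction n as [|n IH]; intros L HL a b Hab Hc.
  - destruct (Hc a) as [k [Hk _]]; [lra|].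
    destruct L; [destruct Hk | simpl in HL; lia].
  - (* the interval of the cover containing [a] reaches [v k]; cover the rest recursively *)
    destruct (Hc a) as [k [Hk Hka]]; [lra|].
    destruct (in_split _ _ Hk) as [L1 [L2 ->]].
    rewrite sum_list_app; simpl.
    assert (Hpos : forall L', 0 <= sum_list (fun k => v k - u k) L')
      by (intros L'; apply sum_list_nonneg; intros m _; specialize (Huv m); lra).
    pose proof (Hpos L1). pose proof (Hpos L2).
    destruct (Rlt_or_le b (v k)) as [Hb|Hb]; [lra|].
    assert (Hrest : b - v k <= sum_list (fun k => v k - u k) (L1 ++ L2)).
    { apply IH; [rewrite length_app in *; simpl in HL; lia | lra |].
      intros x Hx. destruct (Hc x) as [k' [Hk' Hx']]; [lra|].
      exists k'; split; [|lra].
      apply in_app_iff in Hk'; apply in_app_iff; destruct Hk' as [?|[?|?]]; auto.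
      subst; lra. }
    rewrite sum_list_app in Hrest. lra.
Qed.

Lemma finite_subcover (u v : nat -> R) a b :
  (forall x, a <= x <= b -> exists n, u n < x < v n) ->
  exists N, forall x, a <= x <= b -> exists n, (n < N)%nat /\ u n < x < v n.
Proof.
  intros Hc.
  assert (Hdom : forall x, (exists y, (fun y0 x0 => exists n, y0 = INR n /\ u n < x0 < v n) x y) ->
                           (fun y0 => exists n, y0 = INR n) x).
  { intros x [y [n [-> _]]]. exists n; auto. }
  set (fam := mkfamily _ _ Hdom).
  assert (Hopen : covering_open_set (fun c => a <= c <= b) fam).
  { split.
    - intros x Hx. destruct (Hc x Hx) as [n Hn]. exists (INR n). simpl. exists n; auto.
    - intros y x [n [-> Hn]].
      assert (Hd : 0 < Rmin (x - u n) (v n - x)) by (apply Rmin_glb_lt; lra).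
      exists (mkposreal _ Hd). intros z Hz. unfold disc in Hz; simpl in Hz.
      exists n; split; auto. apply Rabs_def2 in Hz.
      pose proof (Rmin_l (x - u n) (v n - x)). pose proof (Rmin_r (x - u n) (v n - x)). lra. }
  destruct (compact_P3 a b fam Hopen) as [D [Hcov [l Hl]]].
  assert (Hbound : exists N, forall n, In (INR n) l -> (n < N)%nat).
  { clear. induction l as [|y l [N HN]]; [exists 0%nat; intros n []|].
    exists (Nat.max N (Z.to_nat (up y))). intros n [H|H].
    - subst. destruct (archimed (INR n)) as [H1 _].
      rewrite INR_IZR_INZ in H1 at 2. apply Rgt_lt, lt_IZR in H1. lia.
    - specialize (HN n H). lia. }
  destruct Hbound as [N HN]. exists N.
  intros x Hx. destruct (Hcov x Hx) as [y [[n [-> Hn]] HD]].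
  exists n; split; auto. apply HN, Hl. split; auto. exists n; auto.
Qed.

Lemma partial_sum_le (g : nat -> R) s :
  (forall n, 0 <= g n) -> infinite_sum g s -> forall N, sum_f_R0 g N <= s.
Proof.
  intros Hg Hs. apply growing_ineq; [|exact Hs].
  intros n; simpl. specialize (Hg (S n)). lra.
Qed.

Lemma series_sum_nonneg (g : nat -> R) s :
  (forall n, 0 <= g n) -> infinite_sum g s -> 0 <= s.
Proof.
  intros Hg Hs. pose proof (partial_sum_le g s Hg Hs 0) as H0.
  pose proof (Hg 0%nat). simpl in H0. lra.
Qed.

Lemma interval_cover_length (u v : nat -> R) al be s :
  (forall n, u n <= v n) -> (forall p, al < p <= be -> exists n, u n < p < v n) ->
  infinite_sum (fun n => v n - u n) s -> be - al <= s.
Proof.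
  intros Huv Hc Hs.
  assert (Hg : forall n, 0 <= v n - u n) by (intros n; specialize (Huv n); lra).
  pose proof (series_sum_nonneg _ s Hg Hs).
  destruct (Rle_or_lt (be - al) s) as [?|Hlt]; auto. exfalso.
  set (e := (be - al - s) / 2).
  destruct (finite_subcover u v (al + e) be) as [N HN].
  { intros x Hx. apply Hc. unfold e in *; lra. }
  assert (Hfin : be - (al + e) <= sum_list (fun k => v k - u k) (seq 0 N)).
  { apply finite_cover_length; auto; [unfold e in *; lra|].
    intros x Hx. destruct (HN x Hx) as [n [Hn Hx']]. exists n; split; auto.
    apply in_seq; lia. }
  assert (sum_list (fun k => v k - u k) (seq 0 N) <= s).
  { destruct N; [simpl; lra|]. rewrite sum_seq. apply partial_sum_le; auto. }
  unfold e in *; lra.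
Qed.

Lemma lebesgue_measure_spec A m :
  is_lebesgue_measure A m -> lebesgue_measure A = m.
Proof.
  intros Hm.
  assert (Hle : forall m1 m2, is_lebesgue_measure A m1 -> is_lebesgue_measure A m2 -> m1 <= m2).
  { intros m1 m2 [Hlow _] [_ Happrox].
    destruct (Rle_or_lt m1 m2) as [?|Hlt]; auto.
    destruct (Happrox (m1 - m2)) as [u [v [s [Hc [Hs Hlt2]]]]]; [lra|].
    specialize (Hlow u v s Hc Hs). lra. }
  assert (Hspec : is_lebesgue_measure A (lebesgue_measure A))
    by (unfold lebesgue_measure; apply epsilon_spec; eauto).
  apply Rle_antisym; auto.
Qed.

Lemma interval_measure (A : R -> Prop) al be :
  (forall p, A p <-> al < p <= be) -> lebesgue_measure A = len al be.
Proof.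
  intros HA. apply lebesgue_measure_spec. unfold len. split.
  - intros u v s [Huv Hc] Hs. apply Rmax_lub.
    + assert (Hg : forall n, 0 <= v n - u n) by (intros n; specialize (Huv n); lra).
      exact (series_sum_nonneg _ s Hg Hs).
    + apply (interval_cover_length u v al be s); auto.
      intros p Hp. apply Hc, HA, Hp.
  - (* a single interval of length [len al be + eps/2] covers *)
    intros eps Heps. set (m := Rmax 0 (be - al)).
    assert (Hm : 0 <= m /\ be - al <= m) by (split; [apply Rmax_l|apply Rmax_r]).
    exists (fun n => match n with O => al | _ => 0 end),
           (fun n => match n with O => al + m + eps / 2 | _ => 0 end), (m + eps / 2).
    split; [split|split].
    + intros [|n]; lra.
    + intros p Hp. apply HA in Hp. exists O. lra.
    + intros e He. exists O. intros n _.
      replace (sum_f_R0 _ n) with (m + eps / 2).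
      * unfold R_dist. rewrite Rminus_diag, Rabs_R0. auto.
      * induction n; simpl; [lra|]. rewrite <- IHn. lra.
    + lra.
Qed.

Definition step (y z : point) : Prop :=
  xc z = (xc y + 1)%Z /\ (tc z = (tc y + 1)%Z \/ tc z = (tc y - 1)%Z).

Ltac point_eq :=
  repeat (apply injective_projections; cbn [fst snd]);
  first [reflexivity | unfold tc, xc in *; cbn [fst snd] in *; lia].

Lemma steps_cons y z r : steps (y :: z :: r) <-> step y z /\ steps (z :: r).
Proof. unfold step; simpl; tauto. Qed.

Lemma step_adjacent y z : step y z -> adjacent y z /\ adjacent z y.
Proof. unfold step, adjacent; intros; lia. Qed.

Lemma edge_between_ends y z : step y z ->
  (edge_lo (edge_between y z) = y /\ edge_hi (edge_between y z) = z) \/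
  (edge_lo (edge_between y z) = z /\ edge_hi (edge_between y z) = y).
Proof.
  destruct y as [t x], z as [t' x']; unfold step, edge_between, edge_lo, edge_hi, e_SE, e_NE.
  cbn [tc xc fst snd]. intros [H1 H2].
  destruct (Z.eqb_spec t' (t + 1)); [left|right]; split; cbn; auto; point_eq.
Qed.

(** Since [x] increases along a step, a step is determined by its edge. *)
Lemma edge_between_inj y z y' z' : step y z -> step y' z' ->
  edge_between y z = edge_between y' z' -> y = y' /\ z = z'.
Proof.
  intros H H' E.
  destruct (edge_between_ends y z H) as [[L1 H1]|[L1 H1]];
  destruct (edge_between_ends y' z' H') as [[L2 H2]|[L2 H2]];
  rewrite <- E in L2, H2; rewrite L1 in L2; rewrite H1 in H2; clear L1 H1 E; subst;
  try (split; reflexivity); exfalso; unfold step in *; lia.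
Qed.

Lemma edge_between_lower y z : step y z ->
  edge_between y z = e_SW z \/ edge_between y z = e_SE z.
Proof.
  destruct y as [t x], z as [t' x']; unfold step, edge_between, e_SW, e_SE, e_NE.
  cbn [tc xc fst snd]. intros [H1 H2].
  destruct (Z.eqb_spec t' (t + 1)); [left; point_eq | right; auto].
Qed.

Definition goes_NE (y z : point) : bool := Z.eqb (tc z) (tc y + 1).
Definition out_edge (ne : bool) (y : point) : edge := if ne then e_NE y else e_NW y.

Lemma edge_between_out y z : step y z -> edge_between y z = out_edge (goes_NE y z) y.
Proof.
  destruct y as [t x], z as [t' x']; unfold step, goes_NE, out_edge, edge_between, e_SE, e_NW.
  cbn [tc xc fst snd]. intros [H1 H2].
  destruct (Z.eqb_spec t' (t + 1)); [reflexivity | point_eq].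
Qed.

Lemma edge_between_inE S y z : step y z -> (S y \/ S z <-> inE S (edge_between y z)).
Proof.
  intros Hs. unfold inE.
  destruct (edge_between_ends y z Hs) as [[-> ->]|[-> ->]]; tauto.
Qed.

(** ** Boundary edges and crossing traces of an arbitrary domain *)

Section Crossings.
Variable S : point -> Prop.

Lemma inBd_neighbour y z : S y -> adjacent y z -> (inBd S z <-> ~ S z).
Proof. intros Hy Hyz. unfold inBd, inSbar. split; [tauto|]. intros Hz; eauto. Qed.

Lemma E_low_entry e : E_low S e <->
  exists y0 z, S z /\ ~ S y0 /\ step y0 z /\ e = edge_between y0 z.
Proof.
  unfold E_low. split.
  - intros [[t x] [Hy [[-> Hb]|[-> Hb]]]];
      rewrite (inBd_neighbour (t, x)) in Hb by (auto; unfold adjacent; cbn; lia).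
    + exists (t - 1, x - 1)%Z, (t, x). repeat split; auto; try (cbn; lia).
      unfold edge_between. cbn. destruct (Z.eqb_spec t (t - 1 + 1)); [point_eq | lia].
    + exists (t + 1, x - 1)%Z, (t, x). repeat split; auto; try (cbn; lia).
      unfold edge_between. cbn. destruct (Z.eqb_spec t (t + 1 + 1)); [lia | reflexivity].
  - intros ([t0 x0] & [t x] & Hz & Hy0 & Hst & ->). exists (t, x). split; auto.
    unfold step in Hst; cbn in Hst. unfold edge_between; cbn.
    destruct (Z.eqb_spec t (t0 + 1)); [left|right]; split;
      try (unfold e_NE, e_SW, e_SE; point_eq);
      rewrite (inBd_neighbour (t, x)) by (auto; unfold adjacent; cbn; lia);
      match goal with |- ~ S ?p => replace p with (t0, x0) by point_eq; exact Hy0 end.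
Qed.

Lemma E_up_exit e : E_up S e <->
  exists z y1, S z /\ ~ S y1 /\ step z y1 /\ e = edge_between z y1.
Proof.
  unfold E_up. split.
  - intros [[t x] [Hy [[-> Hb]|[-> Hb]]]];
      rewrite (inBd_neighbour (t, x)) in Hb by (auto; unfold adjacent; cbn; lia).
    + exists (t, x), (t - 1, x + 1)%Z. repeat split; auto; try (cbn; lia).
      unfold edge_between. cbn. destruct (Z.eqb_spec (t - 1) (t + 1)); [lia | point_eq].
    + exists (t, x), (t + 1, x + 1)%Z. repeat split; auto; try (cbn; lia).
      unfold edge_between. cbn. destruct (Z.eqb_spec (t + 1) (t + 1)); [reflexivity | lia].
  - intros ([t x] & [t1 x1] & Hz & Hy1 & Hst & ->). exists (t, x). split; auto.
    unfold step in Hst; cbn in Hst. unfold edge_between; cbn.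
    destruct (Z.eqb_spec t1 (t + 1)); [right|left]; split;
      try (unfold e_NE, e_NW, e_SE; point_eq);
      rewrite (inBd_neighbour (t, x)) by (auto; unfold adjacent; cbn; lia);
      match goal with |- ~ S ?p => replace p with (t1, x1) by point_eq; exact Hy1 end.
Qed.

Lemma Forall_removelast_cons y z r :
  Forall S (removelast (y :: z :: r)) <-> S y /\ Forall S (removelast (z :: r)).
Proof. apply Forall_cons_iff. Qed.

Definition exit_path (q : list point) : Prop :=
  (2 <= length q)%nat /\ steps q /\ Forall S (removelast q) /\ ~ S (last q (0, 0)%Z).

Lemma exit_path_start y r : exit_path (y :: r) -> S y.
Proof.
  intros (Hlen & _ & Hin & _). destruct r as [|z r]; [cbn in Hlen; lia|].
  apply Forall_removelast_cons in Hin. apply Hin.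
Qed.

Lemma exit_path_cons y z r : S y -> step y z -> exit_path (z :: r) -> exit_path (y :: z :: r).
Proof.
  intros Hy Hs (H1 & H2 & H3 & H4). destruct r as [|w r]; [cbn in H1; lia|].
  split; [cbn; lia|]. split; [apply steps_cons; auto|]. split; [|exact H4].
  simpl removelast in *. constructor; auto.
Qed.

Lemma exit_path_pair y z : S y -> step y z -> ~ S z -> exit_path [y; z].
Proof. intros Hy Hs Hz. split; [cbn; lia|]. split; [cbn; unfold step in Hs; tauto|].
  split; cbn; auto. Qed.

Lemma exit_path_last_step q : exit_path q -> exists y, S y /\ step y (last q (0, 0)%Z).
Proof.
  induction q as [|y q IH]; intros (H1 & H2 & H3 & H4); [cbn in H1; lia|].
  destruct q as [|z r]; [cbn in H1; lia|].
  apply steps_cons in H2 as [Hs H2]. apply Forall_removelast_cons in H3 as [Hy H3].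
  destruct r as [|w r]; [exists y; cbn; auto|].
  apply IH. split; [cbn; lia|]. split; [exact H2|]. split; [exact H3|exact H4].
Qed.

Lemma edges_inE q : steps q -> Forall S (removelast q) -> Forall (inE S) (trace_edges q).
Proof.
  induction q as [|y q IH]; intros H2 H3; [constructor|].
  destruct q as [|z r]; [constructor|].
  apply steps_cons in H2 as [Hs H2]. apply Forall_removelast_cons in H3 as [Hy H3].
  constructor; [apply (edge_between_inE S y z Hs); auto | exact (IH H2 H3)].
Qed.

Lemma in_C_iff l : in_C S l <->
  exists y0 y1 r, l = y0 :: y1 :: r /\ ~ S y0 /\ step y0 y1 /\ exit_path (y1 :: r).
Proof.
  split.
  - intros ((Hlen & Hsteps) & Hhd & Hlast & Hin & Hedges).
    destruct l as [|y0 [|y1 r]]; cbn in Hlen; try lia.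
    apply steps_cons in Hsteps as [H01 Hsteps].
    destruct r as [|z r].
    + (* a single edge of [E(S)] cannot join two boundary points *)
      exfalso. cbn in Hedges. inversion Hedges as [|? ? HE]; subst.
      apply (edge_between_inE S y0 y1 H01) in HE. cbn in Hhd, Hlast.
      destruct Hhd, Hlast; tauto.
    + exists y0, y1, (z :: r). split; [reflexivity|]. split; [apply Hhd|].
      split; [exact H01|]. split; [cbn; lia|]. split; [exact Hsteps|].
      split; [exact Hin | apply Hlast].
  - intros (y0 & y1 & r & -> & Hy0 & H01 & Hexit).
    pose proof Hexit as (Hlen & Hsteps & Hin & Hlast).
    destruct r as [|z r]; [cbn in Hlen; lia|].
    pose proof (exit_path_start _ _ Hexit) as Hy1.
    destruct (exit_path_last_step _ Hexit) as [y [Hy Hy_last]].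
    split; [split; [cbn; lia | apply steps_cons; auto]|].
    split; [split; [right; exists y1; split; [exact Hy1 | exact (proj2 (step_adjacent _ _ H01))]
                 | exact Hy0]|].
    split; [split; [right; exists y; split; [exact Hy | exact (proj1 (step_adjacent _ _ Hy_last))]
                 | exact Hlast]|].
    split; [exact Hin|].
    cbn [trace_edges]. constructor; [apply (edge_between_inE S y0 y1 H01); auto | exact (edges_inE _ Hsteps Hin)].
Qed.

End Crossings.

(** ** Integer ranges and a discrete divergence theorem *)

Definition zrange (n : nat) : list Z := map Z.of_nat (seq 0 n).

Lemma in_zrange n k : In k (zrange n) <-> (0 <= k < Z.of_nat n)%Z.
Proof.
  unfold zrange; rewrite in_map_iff. split.
  - intros [m [<- Hm]]. apply in_seq in Hm. lia.
  - intros H. exists (Z.to_nat k). split; [lia|]. apply in_seq; lia.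
Qed.

Lemma zrange_NoDup n : NoDup (zrange n).
Proof.
  apply NoDup_map_NoDup_ForallPairs; [intros x y _ _; lia | apply seq_NoDup].
Qed.

Lemma telescope (g : Z -> R) n :
  sum_list (fun k => g (k - 1)%Z - g k) (zrange n) = g (-1)%Z - g (Z.of_nat n - 1)%Z.
Proof.
  induction n as [|n IH]; [cbn; lra|].
  unfold zrange in *. rewrite seq_S, map_app, sum_list_app, IH.
  replace (0 + n)%nat with n by lia. replace (Z.of_nat (S n) - 1)%Z with (Z.of_nat n) by lia.
  cbn [map sum_list fold_right]. lra.
Qed.

Lemma grid_flux_balance (H V : Z -> Z -> R) (m n : nat) :
  (forall i j, (0 <= i < Z.of_nat m)%Z -> (0 <= j < Z.of_nat n)%Z ->
     H (i - 1)%Z j + V i (j - 1)%Z = H i j + V i j) ->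
  sum_list (fun j => H (-1)%Z j) (zrange n) + sum_list (fun i => V i (-1)%Z) (zrange m) =
  sum_list (fun j => H (Z.of_nat m - 1)%Z j) (zrange n) +
  sum_list (fun i => V i (Z.of_nat n - 1)%Z) (zrange m).
Proof.
  intros Hcons.
  assert (Hzero : sum_list (fun i => sum_list (fun j =>
            (H (i - 1)%Z j - H i j) + (V i (j - 1)%Z - V i j)) (zrange n)) (zrange m) = 0).
  { rewrite (sum_list_ext_in _ (fun _ => 0)); [apply sum_list_zero|].
    intros i Hi. rewrite (sum_list_ext_in _ (fun _ => 0)); [apply sum_list_zero|].
    intros j Hj. apply in_zrange in Hi, Hj. specialize (Hcons i j Hi Hj). lra. }
  (* summing the [V]-differences along [j] and the [H]-differences along [i] telescopes *)
  rewrite (sum_list_ext_in _ (fun i => sum_list (fun j => H (i - 1)%Z j - H i j) (zrange n) +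
             (V i (-1)%Z - V i (Z.of_nat n - 1)%Z))) in Hzero
    by (intros i _; rewrite sum_list_plus, (telescope (V i)); reflexivity).
  rewrite sum_list_plus, (sum_list_exchange (fun i j => H (i - 1)%Z j - H i j)) in Hzero.
  rewrite (sum_list_ext_in _ (fun j => H (-1)%Z j - H (Z.of_nat m - 1)%Z j)) in Hzero
    by (intros j _; apply (telescope (fun i => H i j))).
  rewrite (sum_list_minus (fun j => H (-1)%Z j) (fun j => H (Z.of_nat m - 1)%Z j)),
    (sum_list_minus (fun i => V i (-1)%Z)) in Hzero. lra.
Qed.

Lemma NoDup_two_blocks {B} (f g : Z -> B) m n :
  (forall i i', f i = f i' -> i = i') -> (forall j j', g j = g j' -> j = j') ->
  (forall i j, In i (zrange m) -> In j (zrange n) -> f i <> g j) ->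
  NoDup (map f (zrange m) ++ map g (zrange n)).
Proof.
  intros Hf Hg Hfg. apply NoDup_app.
  - apply NoDup_map_NoDup_ForallPairs; [intros ? ? _ _; apply Hf | apply zrange_NoDup].
  - apply NoDup_map_NoDup_ForallPairs; [intros ? ? _ _; apply Hg | apply zrange_NoDup].
  - intros x H1 H2. apply in_map_iff in H1 as [i [<- Hi]].
    apply in_map_iff in H2 as [j [E Hj]]. exact (Hfg i j Hi Hj (eq_sym E)).
Qed.

Lemma NoDup_flat_map_keyed {A B K} (key : A -> K) (key_of : B -> K) (g : A -> list B) L :
  NoDup (map key L) -> (forall x, In x L -> NoDup (g x)) ->
  (forall x z, In x L -> In z (g x) -> key_of z = key x) -> NoDup (flat_map g L).
Proof.
  induction L as [|a L IH]; intros Hkeys Hblocks Hkey; cbn; [constructor|].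
  inversion Hkeys as [|? ? Ha Hkeys']; subst. apply NoDup_app.
  - apply Hblocks; cbn; auto.
  - apply IH; auto; intros; [apply Hblocks | apply Hkey]; cbn; auto.
  - intros z Hz Hz'. apply in_flat_map in Hz' as [x [Hx Hzx]].
    apply Ha. rewrite <- (Hkey a z (or_introl eq_refl) Hz), (Hkey x z (or_intror Hx) Hzx).
    apply in_map; auto.
Qed.

(** ** Routing of heights through a vertex

    For a flow field on an arbitrary domain [S], the association [~_y] at a
    point [y] of [S] sends the heights [(0, eta f]] of a lower edge [f]
    to the two upper edges by translation: the heights up to the threshold
    [tau y f] go to [e_NW y], the others to [e_NE y].  Following a trace
    therefore cuts the heights of its first edge down to an interval, whose
    length is the weight of the trace. *)

Section Routing.
Variable S : point -> Prop.
Variable eta : edge -> R.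
Hypothesis Hflow : flow_field S eta.

Definition lower (f : edge) (y : point) : Prop := f = e_SW y \/ f = e_SE y.

Lemma flow_at y : S y ->
  0 <= eta (e_NE y) /\ 0 <= eta (e_NW y) /\ 0 <= eta (e_SW y) /\ 0 <= eta (e_SE y) /\
  eta (e_NW y) + eta (e_NE y) = eta (e_SW y) + eta (e_SE y).
Proof.
  intros Hy. destruct Hflow as [Hpos Hcons].
  assert (Hhi : forall f, edge_hi f = y -> inE S f) by (intros f Hf; right; rewrite Hf; exact Hy).
  repeat split; auto; apply Hpos; [left; exact Hy | apply Hhi | apply Hhi | left; exact Hy];
    destruct y; unfold edge_hi, e_NW, e_SW; point_eq.
Qed.

(** Heights of [f] up to [tau y f] are routed to [e_NW y]. *)
Definition tau (y : point) (f : edge) : R :=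
  if snd f then eta (e_NW y) else eta (e_NW y) - eta (e_SW y).

(** The heights of [f] routed to an upper edge form the window [(w_lo, w_hi]];
    they are translated by [w_shift]. *)
Record window := Window { w_lo : R; w_hi : R; w_shift : R }.

Definition out_window (ne : bool) (y : point) (f : edge) : window :=
  if ne then Window (Rmax 0 (tau y f)) (eta f) (- tau y f)
  else Window 0 (Rmin (eta f) (tau y f)) (eta (e_NW y) - tau y f).

Ltac solve_minmax := unfold Rmin, Rmax in *; repeat destruct Rle_dec; lra.

Lemma assoc_window y f ne p p' : S y -> lower f y ->
  assoc S eta y f p (out_edge ne y) p' <->
  w_lo (out_window ne y f) < p <= w_hi (out_window ne y f) /\
  p' = p + w_shift (out_window ne y f).
Proof.
  intros Hy Hf. destruct (flow_at y Hy) as (h1 & h2 & h3 & h4 & h5).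
  assert (NEW : e_NE y <> e_NW y) by (unfold e_NE, e_NW; congruence).
  assert (SWE : e_SW y <> e_SE y) by (unfold e_SW, e_SE; congruence).
  unfold assoc, xi, out_window, out_edge, tau.
  destruct Hf as [-> | ->], ne; cbn [snd w_lo w_hi w_shift e_SW e_SE]; split.
  all: try (intros (_ & _ & _ & Hp & Hp' & C);
            destruct C as [(E1 & E2 & C)|[(E1 & E2 & C)|[(E1 & E2 & C)|(E1 & E2 & C)]]];
            try congruence; repeat split; solve_minmax).
  all: intros [Hw ->]; split; [exact Hy|]; split; [tauto|]; split; [tauto|];
       split; [split; solve_minmax|]; split; [split; solve_minmax|].
  all: first [ left; repeat split; solve_minmax
             | right; left; repeat split; solve_minmax
             | right; right; left; repeat split; solve_minmax
             | right; right; right; repeat split; solve_minmax ].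
Qed.

Lemma out_window_range ne y f :
  0 <= w_lo (out_window ne y f) /\ w_hi (out_window ne y f) <= eta f.
Proof. destruct ne; cbn; split; solve_minmax. Qed.

Lemma out_window_fits ne y f : S y -> lower f y ->
  0 <= w_lo (out_window ne y f) + w_shift (out_window ne y f) /\
  w_hi (out_window ne y f) + w_shift (out_window ne y f) <= eta (out_edge ne y).
Proof.
  intros Hy Hf. destruct (flow_at y Hy) as (h1 & h2 & h3 & h4 & h5).
  unfold out_window, out_edge, tau. destruct Hf as [-> | ->], ne; cbn; split; solve_minmax.
Qed.

Lemma out_windows_split A B y f :
  len (Rmax A (w_lo (out_window false y f))) (Rmin B (w_hi (out_window false y f))) +
  len (Rmax A (w_lo (out_window true y f))) (Rmin B (w_hi (out_window true y f))) =
  len (Rmax A 0) (Rmin B (eta f)).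
Proof. cbn. unfold len. solve_minmax. Qed.

Lemma len_shift_window A B lo hi sh al be :
  len (Rmax A (Rmax lo (al - sh))) (Rmin B (Rmin hi (be - sh))) =
  len (Rmax (Rmax A lo + sh) al) (Rmin (Rmin B hi + sh) be).
Proof. unfold len. solve_minmax. Qed.

Lemma len_window_fit A B lo hi sh e : 0 <= lo + sh -> hi + sh <= e ->
  len (Rmax (Rmax A lo + sh) 0) (Rmin (Rmin B hi + sh) e) = len (Rmax A lo) (Rmin B hi).
Proof. unfold len. solve_minmax. Qed.

(** The heights of [f], a lower edge of the first point of [q], that can be
    followed along all of [q] form the interval [(fst, snd]]. *)
Fixpoint trace_window (q : list point) (f : edge) : R * R :=
  match q with
  | y :: ((z :: _) as r) =>
      let W := out_window (goes_NE y z) y f in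
      let X := trace_window r (edge_between y z) in
      (Rmax (w_lo W) (fst X - w_shift W), Rmin (w_hi W) (snd X - w_shift W))
  | _ => (0, eta f)
  end.

Lemma trace_window_cons y z r f :
  trace_window (y :: z :: r) f =
  (Rmax (w_lo (out_window (goes_NE y z) y f))
        (fst (trace_window (z :: r) (edge_between y z)) - w_shift (out_window (goes_NE y z) y f)),
   Rmin (w_hi (out_window (goes_NE y z) y f))
        (snd (trace_window (z :: r) (edge_between y z)) - w_shift (out_window (goes_NE y z) y f))).
Proof. reflexivity. Qed.

Lemma trace_window_range q f : 0 <= fst (trace_window q f) /\ snd (trace_window q f) <= eta f.
Proof.
  destruct q as [|y [|z r]]; cbn [trace_window fst snd]; try (split; lra).
  destruct (out_window_range (goes_NE y z) y f).
  split; [eapply Rle_trans, Rmax_l | eapply Rle_trans; [apply Rmin_l|]]; auto.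
Qed.

Lemma chain_window q f : steps q -> Forall S (removelast q) -> lower f (hd (0, 0)%Z q) ->
  forall p, (0 < p <= eta f /\ chain S eta q f p) <->
            fst (trace_window q f) < p <= snd (trace_window q f).
Proof.
  revert f; induction q as [|y q IH]; intros f Hsteps Hin Hf p; [cbn; tauto|].
  destruct q as [|z r]; [cbn; tauto|].
  apply steps_cons in Hsteps as [Hs Hsteps]. apply Forall_removelast_cons in Hin as [Hy Hin].
  set (g := edge_between y z).
  specialize (IH g Hsteps Hin (edge_between_lower y z Hs)).
  set (W := out_window (goes_NE y z) y f).
  destruct (out_window_range (goes_NE y z) y f) as [Hlo Hhi]. fold W in Hlo, Hhi.
  assert (Hassoc : forall p p', assoc S eta y f p g p' <-> w_lo W < p <= w_hi W /\ p' = p + w_shift W)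
    by (intros; unfold g; rewrite (edge_between_out y z Hs); apply assoc_window; auto).
  rewrite trace_window_cons. fold g W. cbn [fst snd chain]. fold g. split.
  - intros [Hp [p' [Ha Hc]]].
    assert (Hp' : 0 < p' <= eta g) by apply Ha.
    apply Hassoc in Ha as [Hw ->]. destruct (proj1 (IH _) (conj Hp' Hc)).
    split; [apply Rmax_lub_lt | apply Rmin_glb]; lra.
  - intros [H1 H2]. apply Rmax_Rlt in H1.
    pose proof (Rmin_l (w_hi W) (snd (trace_window (z :: r) g) - w_shift W)).
    pose proof (Rmin_r (w_hi W) (snd (trace_window (z :: r) g) - w_shift W)).
    split; [lra|]. exists (p + w_shift W).
    assert (Ha : assoc S eta y f p g (p + w_shift W)) by (apply Hassoc; split; [split|]; lra).
    split; [exact Ha|]. apply IH. lra.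
Qed.

Lemma weight_trace y0 y1 r : step y0 y1 -> steps (y1 :: r) -> Forall S (removelast (y1 :: r)) ->
  w S eta (y0 :: y1 :: r) =
  len (fst (trace_window (y1 :: r) (edge_between y0 y1)))
      (snd (trace_window (y1 :: r) (edge_between y0 y1))).
Proof.
  intros Hs Hsteps Hin. unfold w. apply interval_measure. intros p.
  apply chain_window; auto. apply edge_between_lower, Hs.
Qed.

End Routing.

(** ** Grid coordinates on a rectangular domain

    With [a = 2a'], ..., [d = 2d'], the domain [rect a b c d] is the image of
    the integer rectangle [[0, MM] × [0, NN]] under [P]; increasing [i] is a
    north-east step and increasing [j] a north-west step. *)

Section Grid.
Variables a' b' c' d' : Z.
Local Notation S0 := (rect (2 * a') (2 * b') (2 * c') (2 * d')).

Definition P (i j : Z) : point := ((a' + d' + i - j)%Z, (a' - d' + i + j)%Z).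
Definition MM : Z := (b' - a')%Z.
Definition NN : Z := (d' - c')%Z.
Definition in_grid (i j : Z) : Prop := (0 <= i <= MM /\ 0 <= j <= NN)%Z.

Lemma rect_P i j : S0 (P i j) <-> in_grid i j.
Proof.
  unfold rect, lattice, in_grid, MM, NN, P, tc, xc; cbn [fst snd]. split.
  - intros [_ [? ?]]; lia.
  - intros [? ?]; split; [exists (a' + i)%Z; lia | lia].
Qed.

Lemma rect_inv y : S0 y -> exists i j, y = P i j /\ in_grid i j.
Proof.
  destruct y as [t x]. unfold rect, lattice, in_grid, MM, NN, P, tc, xc; cbn [fst snd].
  intros [[k Hk] [H1 H2]]. exists (k - a')%Z, (d' - k + x)%Z. split; [point_eq | lia].
Qed.

Lemma P_inj i j i' j' : P i j = P i' j' -> i = i' /\ j = j'.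
Proof. unfold P; intros H; injection H; lia. Qed.

Lemma step_from_P i j z : step (P i j) z <-> z = P (i + 1) j \/ z = P i (j + 1).
Proof.
  destruct z as [t x]; unfold step, P, tc, xc; cbn [fst snd]; split.
  - intros [H1 [H2|H2]]; [left|right]; point_eq.
  - intros [H|H]; injection H; lia.
Qed.

Lemma step_to_P i j y : step y (P i j) -> y = P (i - 1) j \/ y = P i (j - 1).
Proof.
  destruct y as [t x]; unfold step, P, tc, xc; cbn [fst snd].
  intros [H1 [H2|H2]]; [left|right]; point_eq.
Qed.

Lemma edge_NE_step i i' j : i' = (i + 1)%Z -> edge_between (P i j) (P i' j) = e_NE (P i j).
Proof.
  intros ->. unfold edge_between.
  destruct (Z.eqb_spec (tc (P (i + 1) j)) (tc (P i j) + 1)); auto.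
  exfalso; unfold P, tc in *; cbn [fst snd] in *; lia.
Qed.

Lemma edge_NW_step i j j' : j' = (j + 1)%Z -> edge_between (P i j) (P i j') = e_NW (P i j).
Proof.
  intros ->. unfold edge_between.
  destruct (Z.eqb_spec (tc (P i (j + 1))) (tc (P i j) + 1)).
  - exfalso; unfold P, tc in *; cbn [fst snd] in *; lia.
  - unfold e_SE, e_NW, P; point_eq.
Qed.

Lemma goes_NE_P i j : goes_NE (P i j) (P (i + 1) j) = true /\ goes_NE (P i j) (P i (j + 1)) = false.
Proof. unfold goes_NE, P, tc; cbn [fst snd]. split; [apply Z.eqb_eq | apply Z.eqb_neq]; lia. Qed.

Lemma e_SW_P i j : e_SW (P i j) = e_NE (P (i - 1) j).
Proof. unfold e_NE, e_SW, P; point_eq. Qed.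

Lemma e_SE_P i j : e_SE (P i j) = e_NW (P i (j - 1)).
Proof. unfold e_NW, e_SE, P; point_eq. Qed.

Definition in_gridb (i j : Z) : bool :=
  ((0 <=? i)%Z && (i <=? MM)%Z && (0 <=? j)%Z && (j <=? NN)%Z)%bool.

Lemma in_gridb_spec i j : in_gridb i j = true <-> in_grid i j.
Proof. unfold in_gridb, in_grid. rewrite !Bool.andb_true_iff, !Z.leb_le. tauto. Qed.

(** [paths k i j] lists the exit paths of [S0] starting at [P i j], obtained
    by exploring both forward steps to depth [k]; a step leaving the
    rectangle ends the path. *)
Fixpoint paths (k : nat) (i j : Z) : list (list point) :=
  match k with
  | O => []
  | S k' => map (cons (P i j))
      ((if in_gridb i (j + 1) then paths k' i (j + 1) else [[P i (j + 1)]]) ++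
       (if in_gridb (i + 1) j then paths k' (i + 1) j else [[P (i + 1) j]]))
  end.

Definition branch (k : nat) (i j : Z) : list (list point) :=
  if in_gridb i j then paths k i j else [[P i j]].

Lemma paths_S k i j :
  paths (S k) i j = map (cons (P i j)) (branch k i (j + 1) ++ branch k (i + 1) j).
Proof. reflexivity. Qed.

Lemma paths_head k i j q : In q (paths k i j) -> exists r, q = P i j :: r.
Proof.
  destruct k; cbn; [tauto|]. intros H; apply in_map_iff in H as [r [<- _]]; eauto.
Qed.

Lemma branch_head k i j q : In q (branch k i j) -> exists r, q = P i j :: r.
Proof. unfold branch; destruct (in_gridb i j); [apply paths_head|]. intros [<-|[]]; eauto. Qed.

(** A depth exceeding the distance to the far corner explores every exit path. *)
Definition deep_enough (k : nat) (i j : Z) : Prop := (MM - i + NN - j < Z.of_nat k)%Z.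

Lemma paths_exit k : forall i j q, in_grid i j -> In q (paths k i j) -> exit_path S0 q.
Proof.
  induction k as [|k IH]; intros i j q Hij Hq; [destruct Hq|].
  rewrite paths_S in Hq. apply in_map_iff in Hq as [r [<- Hr]].
  assert (Hy : S0 (P i j)) by (apply rect_P; exact Hij).
  assert (Hbranch : forall i' j', step (P i j) (P i' j') -> In r (branch k i' j') ->
                                  exit_path S0 (P i j :: r)).
  { intros i' j' Hs Hr'. unfold branch in Hr'. destruct (in_gridb i' j') eqn:E.
    - destruct (paths_head _ _ _ _ Hr') as [r' ->].
      apply exit_path_cons; auto. apply (IH i' j'); auto. apply in_gridb_spec; auto.
    - destruct Hr' as [<-|[]]. apply exit_path_pair; auto.
      rewrite rect_P, <- in_gridb_spec, E; discriminate. }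
  apply in_app_iff in Hr as [Hr|Hr]; eapply Hbranch; eauto; apply step_from_P; auto.
Qed.

Lemma exit_path_in_paths k : forall i j r, in_grid i j -> deep_enough k i j ->
  exit_path S0 (P i j :: r) -> In (P i j :: r) (paths k i j).
Proof.
  induction k as [|k IH]; intros i j r Hij Hk Hexit;
    [unfold deep_enough, in_grid in *; cbn in Hk; lia|].
  pose proof Hexit as (Hlen & Hsteps & Hin & Hlast).
  destruct r as [|z r]; [cbn in Hlen; lia|].
  apply steps_cons in Hsteps as [Hs Hsteps]. apply Forall_removelast_cons in Hin as [_ Hin].
  rewrite paths_S. apply in_map, in_app_iff.
  assert (Hbranch : forall i' j', z = P i' j' -> (MM - i' + NN - j' = MM - i + NN - j - 1)%Z ->
                                  In (z :: r) (branch k i' j')).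
  { intros i' j' -> Hd. unfold branch. destruct (in_gridb i' j') eqn:E.
    - apply in_gridb_spec in E. apply IH; auto; [unfold deep_enough in *; lia|].
      destruct r as [|w r]; [exfalso; apply Hlast, rect_P, E|].
      split; [cbn; lia|]. split; [exact Hsteps|]. split; [exact Hin | exact Hlast].
    - destruct r as [|w r]; [left; reflexivity|]. exfalso.
      apply Forall_removelast_cons in Hin as [Hz _].
      apply rect_P, in_gridb_spec in Hz. congruence. }
  apply step_from_P in Hs as [-> | ->]; [right | left]; apply Hbranch; auto; lia.
Qed.

Lemma paths_NoDup k : forall i j, NoDup (paths k i j).
Proof.
  induction k as [|k IH]; intros i j; [constructor|].
  rewrite paths_S. apply NoDup_map_NoDup_ForallPairs; [intros x y _ _ H; injection H; auto|].
  assert (Hb : forall i' j', NoDup (branch k i' j')).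
  { intros. unfold branch. destruct (in_gridb i' j'); auto. repeat constructor. intros []. }
  apply NoDup_app; auto.
  intros q H1 H2. destruct (branch_head _ _ _ _ H1) as [r1 ->].
  destruct (branch_head _ _ _ _ H2) as [r2 E]. injection E; intros; lia.
Qed.

Hypothesis Hab : (a' <= b')%Z.
Hypothesis Hcd : (c' <= d')%Z.

Definition nM : nat := Z.to_nat (MM + 1).
Definition nN : nat := Z.to_nat (NN + 1).

Lemma nM_eq : Z.of_nat nM = (MM + 1)%Z.
Proof. unfold nM, MM. lia. Qed.

Lemma nN_eq : Z.of_nat nN = (NN + 1)%Z.
Proof. unfold nN, NN. lia. Qed.

(** The steps entering [S0] through its south-west side [i = 0] and its
    south-east side [j = 0], each recorded with the grid coordinates of its target. *)
Definition entries : list (point * (Z * Z)) :=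
  map (fun j => (P (-1) j, (0, j)%Z)) (zrange nN) ++
  map (fun i => (P i (-1), (i, 0)%Z)) (zrange nM).

Definition exits : list (point * point) :=
  map (fun j => (P MM j, P (MM + 1) j)) (zrange nN) ++
  map (fun i => (P i NN, P i (NN + 1))) (zrange nM).

Lemma entries_spec y0 i j :
  In (y0, (i, j)) entries <-> in_grid i j /\ ~ S0 y0 /\ step y0 (P i j).
Proof.
  pose proof nN_eq; pose proof nM_eq.
  unfold entries. rewrite in_app_iff, !in_map_iff. split.
  - intros [[k [E Hk]]|[k [E Hk]]]; injection E as <- <- <-; apply in_zrange in Hk;
      rewrite rect_P; unfold in_grid, MM, NN, step, P, tc, xc in *; cbn [fst snd]; lia.
  - intros (Hij & Hy0 & Hs). apply step_to_P in Hs as [-> | ->]; rewrite rect_P in Hy0.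
    + left. exists j. split; [f_equal; f_equal; unfold in_grid in *; lia|].
      apply in_zrange; unfold in_grid in *; lia.
    + right. exists i. split; [f_equal; f_equal; unfold in_grid in *; lia|].
      apply in_zrange; unfold in_grid in *; lia.
Qed.

Lemma exits_spec z y1 : In (z, y1) exits <-> S0 z /\ ~ S0 y1 /\ step z y1.
Proof.
  pose proof nN_eq; pose proof nM_eq.
  unfold exits. rewrite in_app_iff, !in_map_iff. split.
  - intros [[k [E Hk]]|[k [E Hk]]]; injection E as <- <-; apply in_zrange in Hk;
      (split; [apply rect_P; unfold in_grid, MM, NN in *; lia|]);
      (split; [rewrite rect_P; unfold in_grid; lia|]);
      apply step_from_P; first [left; reflexivity | right; reflexivity].
  - intros (Hz & Hy1 & Hs). destruct (rect_inv z Hz) as (i & j & -> & Hij).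
    apply step_from_P in Hs as [-> | ->]; rewrite rect_P in Hy1.
    + left. exists j. replace i with MM by (unfold in_grid in *; lia).
      split; [reflexivity | apply in_zrange; unfold in_grid in *; lia].
    + right. exists i. replace j with NN by (unfold in_grid in *; lia).
      split; [reflexivity | apply in_zrange; unfold in_grid in *; lia].
Qed.

Lemma entry_points_NoDup : NoDup (map fst entries).
Proof.
  unfold entries. rewrite map_app, !map_map. cbn [fst].
  apply NoDup_two_blocks; [intros ? ? E; apply P_inj in E; tauto..|].
  intros j i _ Hi E. apply P_inj in E. apply in_zrange in Hi. lia.
Qed.

Lemma exits_NoDup : NoDup exits.
Proof.
  apply NoDup_two_blocks;
    [intros ? ? E; apply pair_equal_spec in E as [E _]; apply P_inj in E; tauto..|].
  intros j i _ _ E. apply pair_equal_spec in E as [E1 E2]. apply P_inj in E1, E2. lia.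
Qed.

Definition entry_edge (s : point * (Z * Z)) : edge :=
  edge_between (fst s) (P (fst (snd s)) (snd (snd s))).

Definition Llow : list edge := map entry_edge entries.

Definition Lup : list edge := map (fun s => edge_between (fst s) (snd s)) exits.

Definition depth : nat := S (Z.to_nat (MM + NN)).

Lemma depth_enough i j : in_grid i j -> deep_enough depth i j.
Proof. unfold in_grid, deep_enough, depth, MM, NN. lia. Qed.

(** Every crossing trace is an entering step followed by an exit path. *)
Definition LC : list (list point) :=
  flat_map (fun s => map (cons (fst s)) (paths depth (fst (snd s)) (snd (snd s)))) entries.

Lemma Llow_spec e : In e Llow <-> E_low S0 e.
Proof.
  unfold Llow. rewrite in_map_iff, E_low_entry. split.
  - intros [[y0 [i j]] [<- Hs]]. apply entries_spec in Hs as (Hij & Hy0 & Hst).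
    exists y0, (P i j). split; [apply rect_P; exact Hij|]. auto.
  - intros (y0 & z & Hz & Hy0 & Hst & ->). destruct (rect_inv z Hz) as (i & j & -> & Hij).
    exists (y0, (i, j)). split; [reflexivity|]. apply entries_spec; auto.
Qed.

Lemma Llow_NoDup : NoDup Llow.
Proof.
  pose proof entry_points_NoDup as Hkeys.
  apply NoDup_map_NoDup_ForallPairs; [|exact (NoDup_map_inv _ _ Hkeys)].
  intros [y0 [i j]] [y0' [i' j']] H H' E.
  apply entries_spec in H as (_ & _ & Hs). apply entries_spec in H' as (_ & _ & Hs').
  destruct (edge_between_inj _ _ _ _ Hs Hs' E) as [-> Ep].
  apply P_inj in Ep as [-> ->]. reflexivity.
Qed.

Lemma Lup_spec e : In e Lup <-> E_up S0 e.
Proof.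
  unfold Lup. rewrite in_map_iff, E_up_exit. split.
  - intros [[z y1] [<- Hs]]. apply exits_spec in Hs. exists z, y1. tauto.
  - intros (z & y1 & Hz & Hy1 & Hst & ->). exists (z, y1).
    split; [reflexivity|]. apply exits_spec; auto.
Qed.

Lemma Lup_NoDup : NoDup Lup.
Proof.
  apply NoDup_map_NoDup_ForallPairs; [|exact exits_NoDup].
  intros [z y1] [z' y1'] H H' E.
  apply exits_spec in H as (_ & _ & Hs). apply exits_spec in H' as (_ & _ & Hs').
  destruct (edge_between_inj _ _ _ _ Hs Hs' E) as [-> ->]. reflexivity.
Qed.

Lemma LC_spec l : In l LC <-> in_C S0 l.
Proof.
  unfold LC. rewrite in_flat_map, in_C_iff. split.
  - intros [[y0 [i j]] [Hs Hl]]. apply in_map_iff in Hl as [q [<- Hq]]. cbn [fst snd] in Hq.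
    apply entries_spec in Hs as (Hij & Hy0 & Hst).
    destruct (paths_head _ _ _ _ Hq) as [r ->].
    exists y0, (P i j), r. split; [reflexivity|]. split; [exact Hy0|]. split; [exact Hst|].
    exact (paths_exit _ _ _ _ Hij Hq).
  - intros (y0 & y1 & r & -> & Hy0 & Hst & Hexit).
    destruct (rect_inv y1 (exit_path_start _ _ _ Hexit)) as (i & j & -> & Hij).
    exists (y0, (i, j)). split; [apply entries_spec; auto|].
    apply in_map, exit_path_in_paths; auto. apply depth_enough, Hij.
Qed.

Lemma LC_NoDup : NoDup LC.
Proof.
  apply (NoDup_flat_map_keyed fst (fun l => hd (0, 0)%Z l)).
  - exact entry_points_NoDup.
  - intros s _. apply NoDup_map_NoDup_ForallPairs; [|apply paths_NoDup].
    intros x y _ _ E. injection E; auto.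
  - intros s z _ Hz. apply in_map_iff in Hz as [q [<- _]]. reflexivity.
Qed.

Variable eta : edge -> R.
Hypothesis Hflow : flow_field S0 eta.

(** The window
    [(A, B]] is arbitrary so that the statement survives the induction. *)
Lemma paths_window_sum k : forall i j f A B,
  in_grid i j -> deep_enough k i j -> lower f (P i j) ->
  sum_list (fun q => len (Rmax A (fst (trace_window eta q f)))
                         (Rmin B (snd (trace_window eta q f)))) (paths k i j) =
  len (Rmax A 0) (Rmin B (eta f)).
Proof.
  induction k as [|k IH]; intros i j f A B Hij Hk Hf;
    [unfold deep_enough, in_grid in *; cbn in Hk; lia|].
  assert (Hy : S0 (P i j)) by (apply rect_P; exact Hij).
  assert (Hbranch : forall i' j' ne, step (P i j) (P i' j') -> goes_NE (P i j) (P i' j') = ne ->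
      (MM - i' + NN - j' = MM - i + NN - j - 1)%Z ->
      sum_list (fun q => len (Rmax A (fst (trace_window eta (P i j :: q) f)))
                             (Rmin B (snd (trace_window eta (P i j :: q) f)))) (branch k i' j') =
      len (Rmax A (w_lo (out_window eta ne (P i j) f))) (Rmin B (w_hi (out_window eta ne (P i j) f)))).
  { intros i' j' ne Hs Hne Hd.
    set (W := out_window eta ne (P i j) f). set (g := out_edge ne (P i j)).
    assert (Hg : edge_between (P i j) (P i' j') = g)
      by (unfold g; rewrite <- Hne; apply edge_between_out, Hs).
    destruct (out_window_fits S0 eta Hflow ne (P i j) f Hy Hf) as [Hfit1 Hfit2].
    rewrite (sum_list_ext_in _ (fun q =>
        len (Rmax (Rmax A (w_lo W) + w_shift W) (fst (trace_window eta q g)))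
            (Rmin (Rmin B (w_hi W) + w_shift W) (snd (trace_window eta q g))))).
    - rewrite <- (len_window_fit A B (w_lo W) (w_hi W) (w_shift W) (eta g)) by assumption.
      unfold branch. destruct (in_gridb i' j') eqn:E.
      + apply in_gridb_spec in E. apply IH; auto; [unfold deep_enough in *; lia|].
        rewrite <- Hg. apply edge_between_lower, Hs.
      + cbn. lra.
    - intros q Hq. destruct (branch_head _ _ _ _ Hq) as [r ->].
      rewrite trace_window_cons, Hne, Hg. apply len_shift_window. }
  rewrite paths_S, sum_list_map, sum_list_app.
  destruct (goes_NE_P i j) as [HNE HNW].
  rewrite (Hbranch i (j + 1)%Z false), (Hbranch (i + 1)%Z j true);
    auto; try (apply step_from_P; auto); try lia.
  apply out_windows_split.
Qed.

Lemma entry_weight_sum y0 i j : In (y0, (i, j)) entries ->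
  sum_list (w S0 eta) (map (cons y0) (paths depth i j)) = eta (edge_between y0 (P i j)).
Proof.
  intros Hs. apply entries_spec in Hs as (Hij & Hy0 & Hst).
  set (f := edge_between y0 (P i j)).
  assert (Hf : lower f (P i j)) by apply edge_between_lower, Hst.
  assert (Hf0 : 0 <= eta f)
    by (destruct (flow_at S0 eta Hflow (P i j)) as (? & ? & ? & ? & _);
        [apply rect_P; exact Hij | destruct Hf as [-> | ->]; auto]).
  rewrite sum_list_map.
  rewrite (sum_list_ext_in _ (fun q => len (Rmax 0 (fst (trace_window eta q f)))
                                           (Rmin (eta f) (snd (trace_window eta q f))))).
  - rewrite paths_window_sum; auto; [|apply depth_enough, Hij].
    unfold len, Rmax, Rmin. repeat destruct Rle_dec; lra.
  - intros q Hq. destruct (paths_head _ _ _ _ Hq) as [r ->].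
    destruct (paths_exit _ _ _ _ Hij Hq) as (_ & Hsteps & Hin & _).
    rewrite weight_trace; auto.
    destruct (trace_window_range eta (P i j :: r) f) as [B1 B2].
    rewrite Rmax_right, Rmin_right by lra. reflexivity.
Qed.

Lemma weights_LC : sum_list (w S0 eta) LC = sum_list eta Llow.
Proof.
  unfold LC, Llow. rewrite sum_flat_map, sum_list_map.
  apply sum_list_ext_in. intros [y0 [i j]] Hs. apply entry_weight_sum, Hs.
Qed.

Lemma flow_Llow_Lup : sum_list eta Llow = sum_list eta Lup.
Proof.
  set (H := fun i j => eta (e_NE (P i j))). set (V := fun i j => eta (e_NW (P i j))).
  assert (Hlow : sum_list eta Llow =
    sum_list (fun j => H (-1)%Z j) (zrange nN) + sum_list (fun i => V i (-1)%Z) (zrange nM)).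
  { unfold Llow, entries. rewrite map_app, !map_map, sum_list_app, !sum_list_map.
    f_equal; apply sum_list_ext_in; intros k _; unfold entry_edge; cbn [fst snd].
    - rewrite (edge_NE_step (-1) 0 k) by lia. reflexivity.
    - rewrite (edge_NW_step k (-1) 0) by lia. reflexivity. }
  assert (Hup : sum_list eta Lup =
    sum_list (fun j => H MM j) (zrange nN) + sum_list (fun i => V i NN) (zrange nM)).
  { unfold Lup, exits. rewrite map_app, !map_map, sum_list_app, !sum_list_map.
    f_equal; apply sum_list_ext_in; intros k _; cbn [fst snd].
    - rewrite (edge_NE_step MM (MM + 1) k) by lia. reflexivity.
    - rewrite (edge_NW_step k NN (NN + 1)) by lia. reflexivity. }
  pose proof (grid_flux_balance H V nM nN) as Hbalance.
  rewrite nM_eq, nN_eq in Hbalance.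
  replace (MM + 1 - 1)%Z with MM in Hbalance by lia.
  replace (NN + 1 - 1)%Z with NN in Hbalance by lia.
  rewrite Hlow, Hup. apply Hbalance. intros i j Hi Hj.
  destruct (flow_at S0 eta Hflow (P i j)) as (_ & _ & _ & _ & Hcons);
    [apply rect_P; unfold in_grid; lia|].
  rewrite e_SW_P, e_SE_P in Hcons. unfold H, V. lra.
Qed.

End Grid.

Theorem mainTheorem10 (a b c d : Z) (eta : edge -> R) :
  Z.Even a -> Z.Even b -> Z.Even c -> Z.Even d -> (a <= b)%Z -> (c <= d)%Z ->
  flow_field (rect a b c d) eta ->
  exists (Llow Lup : list edge) (LC : list (list point)),
    NoDup Llow /\ (forall e, In e Llow <-> E_low (rect a b c d) e) /\
    NoDup Lup /\ (forall e, In e Lup <-> E_up (rect a b c d) e) /\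
    NoDup LC /\ (forall l, In l LC <-> in_C (rect a b c d) l) /\
    sum_list eta Llow = sum_list eta Lup /\
    sum_list eta Lup = sum_list (w (rect a b c d) eta) LC.
Proof.
  intros [a' ->] [b' ->] [c' ->] [d' ->] Hab Hcd Hflow.
  assert (Hab' : (a' <= b')%Z) by lia. assert (Hcd' : (c' <= d')%Z) by lia.
  exists (Llow a' b' c' d'), (Lup a' b' c' d'), (LC a' b' c' d').
  split; [apply Llow_NoDup; auto|]. split; [apply Llow_spec; auto|].
  split; [apply Lup_NoDup; auto|]. split; [apply Lup_spec; auto|].
  split; [apply LC_NoDup; auto|]. split; [apply LC_spec; auto|].
  split; [apply flow_Llow_Lup; auto|].
  rewrite <- flow_Llow_Lup, weights_LC; auto.
Qed.
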